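(* The perimeter $L^\dagger$ of the focus-inversive triangle is the same for all 3-periodics of $\mathcal{E}$, namely \[L^\dagger=\rho^2\,\frac{\sqrt{(8a^4+4a^2b^2+2b^4)\delta+8a^6+3a^2b^4+2b^6}}{a^2b^2}.\]
   Context: Let $a>b>0$ and let $\mathcal{E}$ be the ellipse $x^2/a^2+y^2/b^2=1$ (the elliptic billiard). Set $c=\sqrt{a^2-b^2}$, $\delta=\sqrt{a^4-a^2b^2+b^4}$, and let the foci be $f_1=(-c,0)$, $f_2=(c,0)$. A 3-periodic is a triangle $P_1P_2P_3$ with vertices on $\mathcal{E}$ such that at each vertex the normal to $\mathcal{E}$ bisects the angle formed by the two sides meeting at that vertex; these form a one-parameter family (there is one through every point of $\mathcal{E}$). Fix $\rho>0$. The focus-inversive triangle of a 3-periodic $P_1P_2P_3$ is the triangle with vertices $P_i^\dagger=f_1+(\rho/d_{1,i})^2(P_i-f_1)$, where $d_{1,i}=|P_i-f_1|$, i.e. the inversions of the $P_i$ in the circle of radius $\rho$ centered at $f_1$. *)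

From Stdlib Require Import Reals.
Open Scope R_scope.

Definition pt := (R * R)%type.

Definition dist (p q : pt) : R :=
  sqrt ((fst p - fst q) ^ 2 + (snd p - snd q) ^ 2).

Definition on_ellipse (a b : R) (p : pt) : Prop :=
  (fst p) ^ 2 / a ^ 2 + (snd p) ^ 2 / b ^ 2 = 1.

(* At vertex p of the ellipse, with neighbouring vertices q and s, the normal
   to the ellipse (direction (x/a^2, y/b^2)) bisects the angle q p s, i.e. it is
   parallel to the sum of the unit vectors from p towards q and towards s
   (the internal bisector direction). *)
Definition normal_bisects (a b : R) (p q s : pt) : Prop :=
  let ux := (fst q - fst p) / dist q p in
  let uy := (snd q - snd p) / dist q p in
  let vx := (fst s - fst p) / dist s p in
  let vy := (snd s - snd p) / dist s p in
  let nx := fst p / a ^ 2 in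
  let ny := snd p / b ^ 2 in
  (ux + vx) * ny - (uy + vy) * nx = 0.

Definition is_3periodic (a b : R) (P1 P2 P3 : pt) : Prop :=
  on_ellipse a b P1 /\ on_ellipse a b P2 /\ on_ellipse a b P3 /\
  P1 <> P2 /\ P2 <> P3 /\ P3 <> P1 /\
  normal_bisects a b P1 P3 P2 /\
  normal_bisects a b P2 P1 P3 /\
  normal_bisects a b P3 P2 P1.

Definition invert (rho : R) (f p : pt) : pt :=
  let k := (rho / dist p f) ^ 2 in
  (fst f + k * (fst p - fst f), snd f + k * (snd p - snd f)).

Definition focus1 (a b : R) : pt := (- sqrt (a ^ 2 - b ^ 2), 0).

Definition focus_inversive_perimeter (a b rho : R) (P1 P2 P3 : pt) : R :=
  let f1 := focus1 a b in
  let Q1 := invert rho f1 P1 in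
  let Q2 := invert rho f1 P2 in
  let Q3 := invert rho f1 P3 in
  dist Q1 Q2 + dist Q2 Q3 + dist Q3 Q1.

From Pilot Require Import Defs.
From Stdlib Require Import Reals Lra.
Open Scope R_scope.
(* Re-import Defs so that its [dist] takes precedence over the metric-space
   [dist] exported by Reals. *)
Import Defs.

(* Write the vertices in eccentric coordinates P_i = (a X_i, b Y_i), X_i^2 + Y_i^2 = 1,
   and call 1 - <P_i, P_j> (the ellipse inner product) the gap of the side P_i P_j.
   1. The bisector property at a vertex says that gap/length is the same for the
      two sides through that vertex; hence gap = k * length for all three sides,
      with a common k > 0.
   2. Squaring, each pair of vertices satisfies the bilinear relation
      (1 - S) X_i X_j + (1 + S) Y_i Y_j = R, with S = k^2 c^2, R = 1 - k^2 (2 a^2 - c^2).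
   3. Three distinct points of the unit circle pairwise satisfying such a relation
      force the closing condition S^2 - 2 R - 1 = 0 and determine the symmetric
      functions X1 X2 + X1 X3 + X2 X3 and X1 X2 X3 (in terms of X1 + X2 + X3).
   4. Inversion about f1 maps the side P_i P_j to one of length
      rho^2 |P_i P_j| / (r_i r_j), r_i = a + c X_i.  Expressing |P_i P_j| through
      X_i X_j, the perimeter becomes a symmetric expression in the X_i, which by 3
      equals rho^2 * 2 k (3 + S) / ((1 - S) (1 + S)); solving the closing condition
      for k turns this into the closed form of the theorem. *)

Lemma sum_sq_pos (u v : R) : u <> 0 \/ v <> 0 -> 0 < u ^ 2 + v ^ 2.
Proof.
  intros [h | h]; pose proof (Rsqr_pos_lt _ h) as hs; unfold Rsqr in hs; nra.
Qed.

Lemma pair_neq (u v u' v' : R) : (u, v) <> (u', v') -> u - u' <> 0 \/ v - v' <> 0.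
Proof.
  intro h. destruct (Req_dec u u'); [right | left; lra].
  intro e. apply h. f_equal; lra.
Qed.

Lemma dist_sym (p q : pt) : dist p q = dist q p.
Proof. unfold dist. f_equal. ring. Qed.

Lemma dist_sq (p q : pt) : dist p q ^ 2 = (fst p - fst q) ^ 2 + (snd p - snd q) ^ 2.
Proof.
  unfold dist. apply pow2_sqrt.
  apply Rplus_le_le_0_compat; apply pow2_ge_0.
Qed.

Lemma dist_pos (p q : pt) : p <> q -> 0 < dist p q.
Proof.
  intro h. unfold dist. apply sqrt_lt_R0, sum_sq_pos.
  destruct p as [px py], q as [qx qy]. exact (pair_neq _ _ _ _ h).
Qed.

Lemma invert_dist (rho : R) (f p q : pt) :
  0 < dist p f -> 0 < dist q f ->
  dist (invert rho f p) (invert rho f q) = rho ^ 2 * dist p q / (dist p f * dist q f).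
Proof.
  intros Hp Hq.
  pose proof (dist_sq p f) as Ep. pose proof (dist_sq q f) as Eq.
  pose proof (dist_sq p q) as Epq.
  assert (Hpq : 0 <= dist p q) by (unfold dist; apply sqrt_pos).
  set (dp := dist p f) in *. set (dq := dist q f) in *. set (dpq := dist p q) in *.
  destruct f as [fx fy], p as [px py], q as [qx qy]; cbn [fst snd] in *.
  unfold invert, dist at 1. cbn [fst snd]. fold dp dq.
  assert (Hnn : 0 <= rho ^ 2 * dpq / (dp * dq)).
  { apply Rmult_le_pos; [apply Rmult_le_pos; [apply pow2_ge_0 | lra] |].
    apply Rlt_le, Rinv_0_lt_compat, Rmult_lt_0_compat; lra. }
  rewrite <- (sqrt_pow2 _ Hnn). f_equal. clearbody dp dq dpq.
  apply Rminus_diag_uniq.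
  transitivity (rho ^ 4 / (dp ^ 4 * dq ^ 4) *
    ((dq ^ 2 - dp ^ 2) * (dq ^ 2 * ((px - fx) ^ 2 + (py - fy) ^ 2 - dp ^ 2)
                          - dp ^ 2 * ((qx - fx) ^ 2 + (qy - fy) ^ 2 - dq ^ 2))
     + dp ^ 2 * dq ^ 2 * ((px - qx) ^ 2 + (py - qy) ^ 2 - dpq ^ 2))).
  - field. lra.
  - rewrite <- Ep, <- Eq, <- Epq. ring.
Qed.

Lemma focal_dist (a b X Y : R) :
  0 < b -> b < a -> X ^ 2 + Y ^ 2 = 1 ->
  dist (a * X, b * Y) (focus1 a b) = a + sqrt (a ^ 2 - b ^ 2) * X.
Proof.
  intros Hb Hba HC.
  set (c := sqrt (a ^ 2 - b ^ 2)).
  assert (Hc2 : c ^ 2 = a ^ 2 - b ^ 2) by (apply pow2_sqrt; nra).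
  assert (Hc0 : 0 <= c) by apply sqrt_pos.
  assert (Hpos : 0 <= a + c * X) by nra.
  unfold dist, focus1. cbn [fst snd]. fold c.
  rewrite <- (sqrt_pow2 _ Hpos). f_equal.
  replace ((b * Y - 0) ^ 2) with (b ^ 2 * Y ^ 2) by ring.
  replace (Y ^ 2) with (1 - X ^ 2) by lra.
  replace (b ^ 2) with (a ^ 2 - c ^ 2) by lra.
  ring.
Qed.

Lemma focal_pos (a c X Y : R) : 0 <= c -> c < a -> X ^ 2 + Y ^ 2 = 1 -> 0 < a + c * X.
Proof. intros Hc Hca HC. assert (0 <= Y ^ 2) by apply pow2_ge_0. nra. Qed.

(* The inner product for which the ellipse is the unit circle; the normal at p
   is (fst p / a^2, snd p / b^2), so ell_dot a b p w is its pairing with w. *)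
Definition ell_dot (a b : R) (p q : pt) : R :=
  fst p * fst q / a ^ 2 + snd p * snd q / b ^ 2.

Lemma ell_dot_sym (a b : R) (p q : pt) : ell_dot a b p q = ell_dot a b q p.
Proof. unfold ell_dot, Rdiv. ring. Qed.

(* For points of the ellipse, 1 - <p, q> is half the ellipse-norm of q - p,
   hence positive when p <> q.  We call it the gap of the chord pq. *)
Lemma ellipse_gap_pos (a b : R) (p q : pt) :
  0 < a -> 0 < b -> on_ellipse a b p -> on_ellipse a b q -> p <> q ->
  0 < 1 - ell_dot a b p q.
Proof.
  intros Ha Hb Cp Cq Hpq.
  destruct p as [px py], q as [qx qy]. unfold on_ellipse, ell_dot in *. cbn [fst snd] in *.
  assert (Hgap : 1 - (px * qx / a ^ 2 + py * qy / b ^ 2)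
                 = (((px - qx) / a) ^ 2 + ((py - qy) / b) ^ 2) / 2).
  { apply Rminus_diag_uniq.
    transitivity (1 - (px ^ 2 / a ^ 2 + py ^ 2 / b ^ 2 + (qx ^ 2 / a ^ 2 + qy ^ 2 / b ^ 2)) / 2);
      [field; lra | lra]. }
  rewrite Hgap.
  enough (0 < ((px - qx) / a) ^ 2 + ((py - qy) / b) ^ 2) by lra.
  apply sum_sq_pos.
  destruct (pair_neq _ _ _ _ Hpq) as [h | h]; [left | right];
    unfold Rdiv; apply Rmult_integral_contrapositive_currified; try exact h;
    apply Rinv_neq_0_compat; lra.
Qed.

Lemma unit_direction (wx wy d : R) :
  0 < d -> d ^ 2 = wx ^ 2 + wy ^ 2 -> (wx / d) ^ 2 + (wy / d) ^ 2 = 1.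
Proof.
  intros Hd Hw. transitivity ((wx ^ 2 + wy ^ 2) / d ^ 2); [field; lra |].
  rewrite <- Hw. field. lra.
Qed.

(* If n is parallel to the sum of two unit vectors u, v (and that sum is
   nonzero), then n makes equal angles with u and v: n.u = n.v, because u - v is
   orthogonal to u + v. *)
Lemma bisector_projections (ux uy vx vy nx ny : R) :
  ux ^ 2 + uy ^ 2 = 1 -> vx ^ 2 + vy ^ 2 = 1 ->
  (ux + vx) * ny - (uy + vy) * nx = 0 ->
  ux + vx <> 0 \/ uy + vy <> 0 ->
  nx * ux + ny * uy = nx * vx + ny * vy.
Proof.
  intros Hu Hv Hpar Hsum.
  set (T := nx * (ux - vx) + ny * (uy - vy)).
  assert (Horth : (ux - vx) * (ux + vx) + (uy - vy) * (uy + vy) = 0).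
  { transitivity ((ux ^ 2 + uy ^ 2) - (vx ^ 2 + vy ^ 2)); [ring | lra]. }
  assert (Tx : T * (ux + vx) = 0).
  { transitivity (nx * ((ux - vx) * (ux + vx) + (uy - vy) * (uy + vy))
                  + (uy - vy) * ((ux + vx) * ny - (uy + vy) * nx)); [unfold T; ring |].
    rewrite Horth, Hpar. ring. }
  assert (Ty : T * (uy + vy) = 0).
  { transitivity (ny * ((ux - vx) * (ux + vx) + (uy - vy) * (uy + vy))
                  - (ux - vx) * ((ux + vx) * ny - (uy + vy) * nx)); [unfold T; ring |].
    rewrite Horth, Hpar. ring. }
  assert (HT : T = 0).
  { destruct Hsum as [h | h]; [apply (Rmult_eq_reg_r (ux + vx)) | apply (Rmult_eq_reg_r (uy + vy))];
      try rewrite Rmult_0_l; assumption. }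
  unfold T in HT. lra.
Qed.

(* A line through a point p of the ellipse meets it in at most one other
   point, so p + w and p - lam w (lam > 0) cannot both lie on it unless w = 0. *)
Lemma chord_not_reflected (a b px py wx wy lam : R) :
  0 < a -> 0 < b -> 0 < lam ->
  on_ellipse a b (px, py) -> on_ellipse a b (px + wx, py + wy) ->
  on_ellipse a b (px - lam * wx, py - lam * wy) ->
  wx = 0 /\ wy = 0.
Proof.
  intros Ha Hb Hlam Cp Cw Cl. unfold on_ellipse in *. cbn [fst snd] in *.
  set (A := px * wx / a ^ 2 + py * wy / b ^ 2).
  set (B := (wx / a) ^ 2 + (wy / b) ^ 2).
  assert (EW : 2 * A + B = 0).
  { transitivity ((px + wx) ^ 2 / a ^ 2 + (py + wy) ^ 2 / b ^ 2 - (px ^ 2 / a ^ 2 + py ^ 2 / b ^ 2));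
      [unfold A, B; field; lra | lra]. }
  assert (EL : - 2 * lam * A + lam ^ 2 * B = 0).
  { transitivity ((px - lam * wx) ^ 2 / a ^ 2 + (py - lam * wy) ^ 2 / b ^ 2
                  - (px ^ 2 / a ^ 2 + py ^ 2 / b ^ 2)); [unfold A, B; field; lra | lra]. }
  assert (HB : B = 0).
  { apply (Rmult_eq_reg_l (lam * (1 + lam))); [| nra].
    transitivity (lam * (2 * A + B) + (- 2 * lam * A + lam ^ 2 * B)); [ring |].
    rewrite EW, EL. ring. }
  destruct (Req_dec wx 0) as [hx | hx], (Req_dec wy 0) as [hy | hy]; try (split; assumption);
    exfalso; assert (0 < B); try lra; apply sum_sq_pos;
    [right | left | left]; unfold Rdiv; apply Rmult_integral_contrapositive_currified;
    try assumption; apply Rinv_neq_0_compat; lra.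
Qed.

(* Bisector property at a vertex p with neighbours q, s: the normal makes
   equal angles with pq and ps.  Since gap p q = - n.(q - p), this says exactly
   that gap/length is the same for the chords pq and ps.  The antipodal case
   u + v = 0 is excluded by chord_not_reflected. *)
Lemma bisector_gap_ratio (a b : R) (p q s : pt) :
  0 < a -> 0 < b ->
  on_ellipse a b p -> on_ellipse a b q -> on_ellipse a b s ->
  q <> p -> s <> p -> normal_bisects a b p q s ->
  (1 - ell_dot a b p q) * dist s p = (1 - ell_dot a b p s) * dist q p.
Proof.
  intros Ha Hb Cp Cq Cs Hqp Hsp Hbis.
  pose proof (dist_pos _ _ Hqp) as Hdq. pose proof (dist_pos _ _ Hsp) as Hds.
  pose proof (dist_sq q p) as Eq. pose proof (dist_sq s p) as Es.
  destruct p as [px py], q as [qx qy], s as [sx sy].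
  unfold normal_bisects, ell_dot in *. cbn [fst snd] in *.
  set (dq := dist (qx, qy) (px, py)) in *. set (ds := dist (sx, sy) (px, py)) in *.
  set (nx := px / a ^ 2). set (ny := py / b ^ 2).
  assert (Hgap : forall x y d, 0 < d ->
            1 - (px * x / a ^ 2 + py * y / b ^ 2) = - d * (nx * ((x - px) / d) + ny * ((y - py) / d))).
  { intros x y d hd. unfold on_ellipse in Cp. cbn [fst snd] in Cp.
    apply Rminus_diag_uniq.
    transitivity (1 - (px ^ 2 / a ^ 2 + py ^ 2 / b ^ 2)); [unfold nx, ny; field; lra | lra]. }
  assert (Hproj : nx * ((qx - px) / dq) + ny * ((qy - py) / dq)
                  = nx * ((sx - px) / ds) + ny * ((sy - py) / ds)).
  { apply bisector_projections;
      [exact (unit_direction _ _ _ Hdq Eq) | exact (unit_direction _ _ _ Hds Es) | exact Hbis |].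
    destruct (Req_dec ((qx - px) / dq + (sx - px) / ds) 0) as [hx | hx]; [| left; exact hx].
    destruct (Req_dec ((qy - py) / dq + (sy - py) / ds) 0) as [hy | hy]; [| right; exact hy].
    exfalso. apply Hsp.
    destruct (chord_not_reflected a b px py (sx - px) (sy - py) (dq / ds) Ha Hb
                (Rdiv_lt_0_compat _ _ Hdq Hds) Cp) as [ex ey].
    - replace (px + (sx - px), py + (sy - py)) with (sx, sy) by (f_equal; ring). exact Cs.
    - replace (px - dq / ds * (sx - px), py - dq / ds * (sy - py)) with (qx, qy); [exact Cq |].
      f_equal.
      + apply (Rmult_eq_reg_r (/ dq)); [| apply Rinv_neq_0_compat; lra].
        transitivity (((qx - px) / dq + (sx - px) / ds) + (px / dq - (sx - px) / ds));
          [| rewrite hx]; field; lra.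
      + apply (Rmult_eq_reg_r (/ dq)); [| apply Rinv_neq_0_compat; lra].
        transitivity (((qy - py) / dq + (sy - py) / ds) + (py / dq - (sy - py) / ds));
          [| rewrite hy]; field; lra.
    - f_equal; lra. }
  rewrite (Hgap qx qy dq Hdq), (Hgap sx sy ds Hds), Hproj. ring.
Qed.

Lemma three_periodic_gap_ratio (a b : R) (P1 P2 P3 : pt) :
  0 < a -> 0 < b -> is_3periodic a b P1 P2 P3 ->
  exists k, 0 < k /\
    1 - ell_dot a b P1 P2 = k * dist P1 P2 /\
    1 - ell_dot a b P2 P3 = k * dist P2 P3 /\
    1 - ell_dot a b P3 P1 = k * dist P3 P1.
Proof.
  intros Ha Hb (C1 & C2 & C3 & N12 & N23 & N31 & B1 & B2 & _).
  assert (N21 : P2 <> P1) by (intro e; apply N12; auto).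
  assert (N32 : P3 <> P2) by (intro e; apply N23; auto).
  pose proof (bisector_gap_ratio a b P1 P3 P2 Ha Hb C1 C3 C2 N31 N21 B1) as R1.
  pose proof (bisector_gap_ratio a b P2 P1 P3 Ha Hb C2 C1 C3 N12 N32 B2) as R2.
  pose proof (dist_pos _ _ N12) as d12.
  rewrite (dist_sym P2 P1), (ell_dot_sym a b P1 P3) in R1.
  rewrite (dist_sym P3 P2), (ell_dot_sym a b P2 P1) in R2.
  exists ((1 - ell_dot a b P1 P2) / dist P1 P2).
  split; [exact (Rdiv_lt_0_compat _ _ (ellipse_gap_pos a b P1 P2 Ha Hb C1 C2 N12) d12) |].
  split; [field; lra |].
  split; apply (Rmult_eq_reg_r (dist P1 P2)); try lra.
  - rewrite <- R2. field. lra.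
  - rewrite R1. field. lra.
Qed.

Lemma ellipse_param (a b : R) (p : pt) :
  0 < a -> 0 < b -> on_ellipse a b p ->
  exists X Y, p = (a * X, b * Y) /\ X ^ 2 + Y ^ 2 = 1.
Proof.
  intros Ha Hb Cp. destruct p as [x y]. unfold on_ellipse in Cp. cbn [fst snd] in Cp.
  exists (x / a), (y / b). split.
  - f_equal; field; lra.
  - rewrite <- Cp. field. lra.
Qed.

Lemma ell_dot_scaled (a b X1 Y1 X2 Y2 : R) :
  0 < a -> 0 < b -> ell_dot a b (a * X1, b * Y1) (a * X2, b * Y2) = X1 * X2 + Y1 * Y2.
Proof. intros Ha Hb. unfold ell_dot. cbn [fst snd]. field. lra. Qed.

Lemma scaled_neq (a b X1 Y1 X2 Y2 : R) :
  (a * X1, b * Y1) <> (a * X2, b * Y2) -> (X1, Y1) <> (X2, Y2).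
Proof. intros h e. injection e as -> ->. apply h. reflexivity. Qed.

(* The symmetric bilinear relation between two points of the unit circle
   that encodes "the chord has gap/length ratio k", with S = k^2 c^2. *)
Definition related (S R X Y X' Y' : R) : Prop :=
  (1 - S) * X * X' + (1 + S) * Y * Y' = R.

(* Squaring gap = k * length and using |P Q|^2 = gap * (a^2 (1 - f) + b^2 (1 + f)),
   f = X1 X2 - Y1 Y2, the gap cancels and a bilinear relation remains. *)
Lemma chord_relation (a b c k X1 Y1 X2 Y2 : R) :
  0 < a -> 0 < b -> c ^ 2 = a ^ 2 - b ^ 2 -> 0 < k ->
  X1 ^ 2 + Y1 ^ 2 = 1 -> X2 ^ 2 + Y2 ^ 2 = 1 -> (a * X1, b * Y1) <> (a * X2, b * Y2) ->
  1 - ell_dot a b (a * X1, b * Y1) (a * X2, b * Y2) = k * dist (a * X1, b * Y1) (a * X2, b * Y2) ->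
  related (k ^ 2 * c ^ 2) (1 - k ^ 2 * (2 * a ^ 2 - c ^ 2)) X1 Y1 X2 Y2.
Proof.
  intros Ha Hb Hc Hk C1 C2 N12 Hg.
  assert (Hpos : 0 < 1 - (X1 * X2 + Y1 * Y2)).
  { rewrite <- (ell_dot_scaled a b X1 Y1 X2 Y2 Ha Hb).
    apply ellipse_gap_pos; try assumption; unfold on_ellipse; cbn [fst snd].
    - rewrite <- C1. field. lra.
    - rewrite <- C2. field. lra. }
  rewrite ell_dot_scaled in Hg by assumption.
  set (g := 1 - (X1 * X2 + Y1 * Y2)) in *.
  set (w := a ^ 2 * (1 - X1 * X2 + Y1 * Y2) + b ^ 2 * (1 + X1 * X2 - Y1 * Y2)).
  assert (Hd2 : dist (a * X1, b * Y1) (a * X2, b * Y2) ^ 2 = g * w).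
  { rewrite dist_sq. cbn [fst snd]. unfold g, w.
    apply Rminus_diag_uniq.
    set (u := X1 ^ 2 + Y1 ^ 2 - 1). set (v := X2 ^ 2 + Y2 ^ 2 - 1).
    transitivity (a ^ 2 * (u * Y2 ^ 2 + v * Y1 ^ 2 - u * v) + b ^ 2 * (u * X2 ^ 2 + v * X1 ^ 2 - u * v)).
    - unfold u, v. ring.
    - replace u with 0 by (unfold u; lra). replace v with 0 by (unfold v; lra). ring. }
  assert (Hgw : g = k ^ 2 * w).
  { apply (Rmult_eq_reg_l g); [| lra].
    transitivity ((k * dist (a * X1, b * Y1) (a * X2, b * Y2)) ^ 2); [rewrite <- Hg; ring |].
    rewrite Rpow_mult_distr, Hd2. ring. }
  unfold related. unfold g, w in Hgw.
  replace (b ^ 2) with (a ^ 2 - c ^ 2) in Hgw by lra.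
  lra.
Qed.

Definition chord_triangle (S R X1 Y1 X2 Y2 X3 Y3 : R) : Prop :=
  X1 ^ 2 + Y1 ^ 2 = 1 /\ X2 ^ 2 + Y2 ^ 2 = 1 /\ X3 ^ 2 + Y3 ^ 2 = 1 /\
  (X1, Y1) <> (X2, Y2) /\ (X2, Y2) <> (X3, Y3) /\ (X3, Y3) <> (X1, Y1) /\
  related S R X1 Y1 X2 Y2 /\ related S R X2 Y2 X3 Y3 /\ related S R X3 Y3 X1 Y1.

Lemma related_sym (S R X Y X' Y' : R) :
  related S R X Y X' Y' -> related S R X' Y' X Y.
Proof. unfold related. intro h. rewrite <- h. ring. Qed.

Lemma related_swap (S R X Y X' Y' : R) :
  related S R X Y X' Y' -> related (- S) R Y X Y' X'.
Proof. unfold related. intro h. rewrite <- h. ring. Qed.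

(* The product of the Y-parts of the relations 1-2 and 1-3 is
   (1 + S) Y1^2 * (1 + S) Y2 Y3; rewrite it with Y1^2 = 1 - X1^2 and relation 2-3. *)
Lemma vertex_identity (S R X1 Y1 X2 Y2 X3 Y3 : R) :
  X1 ^ 2 + Y1 ^ 2 = 1 ->
  related S R X1 Y1 X2 Y2 -> related S R X1 Y1 X3 Y3 -> related S R X2 Y2 X3 Y3 ->
  (R - (1 - S) * X1 * X2) * (R - (1 - S) * X1 * X3)
  = (1 + S) * (1 - X1 ^ 2) * (R - (1 - S) * X2 * X3).
Proof.
  unfold related. intros C1 L12 L13 L23.
  rewrite <- L12 at 1. rewrite <- L13 at 1. rewrite <- L23 at 1.
  replace (1 - X1 ^ 2) with (Y1 ^ 2) by lra. ring.
Qed.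

Section ChordTriangle.

Variables S R X1 Y1 X2 Y2 X3 Y3 : R.
Hypothesis Htri : chord_triangle S R X1 Y1 X2 Y2 X3 Y3.

Lemma chord_triangle_rotate : chord_triangle S R X2 Y2 X3 Y3 X1 Y1.
Proof.
  destruct Htri as (C1 & C2 & C3 & N12 & N23 & N31 & L12 & L23 & L31).
  repeat split; assumption.
Qed.

Lemma chord_triangle_swap : chord_triangle (- S) R Y1 X1 Y2 X2 Y3 X3.
Proof.
  destruct Htri as (C1 & C2 & C3 & N12 & N23 & N31 & L12 & L23 & L31).
  repeat split; try lra; try (apply related_swap; assumption);
    intro e; injection e as ey ex; subst;
    [apply N12 | apply N23 | apply N31]; reflexivity.
Qed.

Lemma chord_triangle_degenerate :
  -1 < S -> X1 = X2 -> Y2 = - Y1 /\ Y1 <> 0 /\ Y3 = 0.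
Proof.
  destruct Htri as (C1 & C2 & _ & N12 & _ & _ & _ & L23 & L31).
  intros HS E12. subst X2.
  assert (HY2 : Y2 = - Y1).
  { assert (h : (Y2 - Y1) * (Y2 + Y1) = 0) by (transitivity (Y2 ^ 2 - Y1 ^ 2); [ring | lra]).
    destruct (Rmult_integral _ _ h) as [h' | h']; [| lra].
    exfalso. apply N12. f_equal. lra. }
  subst Y2.
  assert (HY1 : Y1 <> 0) by (intro e; apply N12; f_equal; lra).
  repeat split; try assumption.
  unfold related in L23, L31.
  assert (h : (2 * (1 + S) * Y1) * Y3 = 0) by lra.
  destruct (Rmult_integral _ _ h) as [h' | h']; [| exact h'].
  exfalso. destruct (Rmult_integral _ _ h'); [lra | contradiction].
Qed.

(* Subtracting the vertex identities at vertices 1 and 2 and cancelling the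
   factor X1 - X2 expresses X3 through X1, X2. *)
Lemma chord_elimination :
  X1 <> X2 ->
  R * (1 + S) * (X1 + X2) - (1 - S) * (1 + S + R) * X3 = 2 * S * (1 - S) * (X1 * X2 * X3).
Proof.
  destruct Htri as (C1 & C2 & _ & _ & _ & _ & L12 & L23 & L31).
  intro D12.
  pose proof (vertex_identity S R X1 Y1 X2 Y2 X3 Y3 C1 L12 (related_sym _ _ _ _ _ _ L31) L23) as F1.
  pose proof (vertex_identity S R X2 Y2 X1 Y1 X3 Y3 C2 (related_sym _ _ _ _ _ _ L12) L23
                (related_sym _ _ _ _ _ _ L31)) as F2.
  apply Rminus_diag_uniq.
  apply (Rmult_eq_reg_l (X1 - X2)); [| lra].
  match type of F1 with ?A = ?B => match type of F2 with ?C = ?D =>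
    transitivity ((A - B) - (C - D)); [ring | rewrite F1, F2; ring] end end.
Qed.

End ChordTriangle.

Section ClosingCondition.

Variables S R X1 Y1 X2 Y2 X3 Y3 : R.
Hypothesis Htri : chord_triangle S R X1 Y1 X2 Y2 X3 Y3.

(* With pairwise distinct X coordinates, comparing chord_elimination for two
   vertex orders leaves (X3 - X2) (S^2 - 2 R - 1) = 0. *)
Lemma closing_generic :
  X1 <> X2 -> X2 <> X3 -> X3 <> X1 -> S ^ 2 - 2 * R - 1 = 0.
Proof.
  intros D12 D23 D31.
  pose proof (chord_elimination _ _ _ _ _ _ _ _ Htri D12) as G3.
  pose proof (chord_elimination _ _ _ _ _ _ _ _
                (chord_triangle_rotate _ _ _ _ _ _ _ _ (chord_triangle_rotate _ _ _ _ _ _ _ _ Htri))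
                D31) as G2.
  apply (Rmult_eq_reg_l (X3 - X2)); [| lra].
  transitivity (R * (1 + S) * (X1 + X2) - (1 - S) * (1 + S + R) * X3
                - (R * (1 + S) * (X3 + X1) - (1 - S) * (1 + S + R) * X2)); [ring |].
  rewrite G3, G2. ring.
Qed.

Lemma coords_distinct :
  -1 < S ->
  (X1 <> X2 /\ X2 <> X3 /\ X3 <> X1) \/ (Y1 <> Y2 /\ Y2 <> Y3 /\ Y3 <> Y1).
Proof.
  intro HS.
  pose proof (chord_triangle_rotate _ _ _ _ _ _ _ _ Htri) as Htri2.
  pose proof (chord_triangle_rotate _ _ _ _ _ _ _ _ Htri2) as Htri3.
  destruct (Req_dec X1 X2) as [e | n12];
    [destruct (chord_triangle_degenerate _ _ _ _ _ _ _ _ Htri HS e) as (h1 & h2 & h3);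
     right; repeat split; lra |].
  destruct (Req_dec X2 X3) as [e | n23];
    [destruct (chord_triangle_degenerate _ _ _ _ _ _ _ _ Htri2 HS e) as (h1 & h2 & h3);
     right; repeat split; lra |].
  destruct (Req_dec X3 X1) as [e | n31];
    [destruct (chord_triangle_degenerate _ _ _ _ _ _ _ _ Htri3 HS e) as (h1 & h2 & h3);
     right; repeat split; lra |].
  left. repeat split; assumption.
Qed.

(* When X1 <> X2, the closing condition turns chord_elimination and the
   vertex identity into values of the symmetric functions of X1, X2, X3. *)
Lemma symmetric_generic :
  S ^ 2 - 2 * R - 1 = 0 -> R <> 0 -> X1 <> X2 ->
  2 * (X1 * X2 + X1 * X3 + X2 * X3) = R - (1 + S) /\
  2 * S * (1 - S) * (X1 * X2 * X3) = R * (1 + S) * (X1 + X2 + X3).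
Proof.
  intros HE HR D12.
  pose proof (chord_elimination _ _ _ _ _ _ _ _ Htri D12) as G3.
  destruct Htri as (C1 & _ & _ & _ & _ & _ & L12 & L23 & L31).
  pose proof (vertex_identity S R X1 Y1 X2 Y2 X3 Y3 C1 L12 (related_sym _ _ _ _ _ _ L31) L23) as F1.
  split.
  - apply (Rmult_eq_reg_l R); [| exact HR].
    apply Rminus_diag_uniq.
    match type of F1 with ?A = ?B => match type of G3 with ?C = ?D =>
      transitivity (- (A - B) + X1 * (C - D) - (X1 + X2) * X3 * (S ^ 2 - 2 * R - 1));
        [ring | rewrite F1, G3, HE; ring] end end.
  - rewrite <- G3.
    apply Rminus_diag_uniq.
    transitivity (X3 * (S ^ 2 - 2 * R - 1)); [ring | rewrite HE; ring].
Qed.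

End ClosingCondition.

Section Consequences.

Variables S R X1 Y1 X2 Y2 X3 Y3 : R.
Hypothesis Htri : chord_triangle S R X1 Y1 X2 Y2 X3 Y3.

(* In the Y-distinct case apply closing_generic to the swapped triangle;
   the condition is even in S. *)
Lemma closing_condition : -1 < S -> S ^ 2 - 2 * R - 1 = 0.
Proof.
  intro HS.
  destruct (coords_distinct _ _ _ _ _ _ _ _ Htri HS)
    as [(D12 & D23 & D31) | (D12 & D23 & D31)].
  - exact (closing_generic _ _ _ _ _ _ _ _ Htri D12 D23 D31).
  - pose proof (closing_generic _ _ _ _ _ _ _ _ (chord_triangle_swap _ _ _ _ _ _ _ _ Htri)
                  D12 D23 D31) as H.
    rewrite <- H. ring.
Qed.

(* Some pair has distinct X coordinates; rotate it into position 1-2. *)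
Lemma symmetric_functions :
  0 < S -> S < 1 ->
  2 * (X1 * X2 + X1 * X3 + X2 * X3) = R - (1 + S) /\
  2 * S * (1 - S) * (X1 * X2 * X3) = R * (1 + S) * (X1 + X2 + X3).
Proof.
  intros HS0 HS1.
  assert (HE : S ^ 2 - 2 * R - 1 = 0) by (apply closing_condition; lra).
  assert (HR : R <> 0).
  { assert (0 < (1 - S) * (1 + S)) by (apply Rmult_lt_0_compat; lra).
    intro e. rewrite e in HE. nra. }
  destruct (Req_dec X1 X2) as [E12 | D12];
    [| exact (symmetric_generic _ _ _ _ _ _ _ _ Htri HE HR D12)].
  pose proof (chord_triangle_rotate _ _ _ _ _ _ _ _ Htri) as Htri2.
  assert (D23 : X2 <> X3).
  { intro E23.
    destruct (chord_triangle_degenerate _ _ _ _ _ _ _ _ Htri ltac:(lra) E12) as (_ & h & _).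
    destruct (chord_triangle_degenerate _ _ _ _ _ _ _ _ Htri2 ltac:(lra) E23) as (_ & _ & h').
    contradiction. }
  destruct (symmetric_generic _ _ _ _ _ _ _ _ Htri2 HE HR D23) as [h2 h3].
  split; lra.
Qed.

End Consequences.

(* With S = K c^2 and R = 1 - K (2 a^2 - c^2), the closing condition reads
   (S + 3) (S - 1) = - 4 K b^2, so S < 1. *)
Lemma closing_S_lt_1 (a b c K S R : R) :
  0 < b -> b ^ 2 = a ^ 2 - c ^ 2 -> 0 < K ->
  S = K * c ^ 2 -> R = 1 - K * (2 * a ^ 2 - c ^ 2) -> S ^ 2 - 2 * R - 1 = 0 -> S < 1.
Proof.
  intros Hb Hb2 HK HS HR HE.
  assert (Hfac : (S + 3) * (S - 1) = - 4 * K * b ^ 2).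
  { transitivity ((S ^ 2 - 2 * R - 1) + 2 * R + 2 * S - 2); [ring |].
    rewrite HE, Hb2, HS, HR. ring. }
  assert (0 <= S) by (rewrite HS; apply Rmult_le_pos; [lra | apply pow2_ge_0]).
  assert (0 < K * b ^ 2) by (apply Rmult_lt_0_compat; [lra | apply pow_lt; lra]).
  nra.
Qed.

(* The sum of the chord gaps weighted by the opposite focal distances is
   proportional to the product of the focal distances: both sides only involve
   the symmetric functions of X1, X2, X3, which are known. *)
Lemma weighted_gap_sum (a c K S R X1 X2 X3 : R) :
  S = K * c ^ 2 -> R = 1 - K * (2 * a ^ 2 - c ^ 2) -> S <> 0 -> S <> 1 ->
  S ^ 2 - 2 * R - 1 = 0 ->
  2 * (X1 * X2 + X1 * X3 + X2 * X3) = R - (1 + S) ->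
  2 * S * (1 - S) * (X1 * X2 * X3) = R * (1 + S) * (X1 + X2 + X3) ->
  (1 - S) * ((1 + S - R - 2 * S * (X1 * X2)) * (a + c * X3)
             + (1 + S - R - 2 * S * (X2 * X3)) * (a + c * X1)
             + (1 + S - R - 2 * S * (X3 * X1)) * (a + c * X2))
  = 2 * K * (3 + S) * ((a + c * X1) * (a + c * X2) * (a + c * X3)).
Proof.
  intros HS HR HS0 HS1 HE H2 H3.
  apply (Rmult_eq_reg_l (S * (1 - S))); [| apply Rmult_integral_contrapositive_currified; lra].
  apply Rminus_diag_uniq.
  set (e1 := X1 + X2 + X3). set (e2 := X1 * X2 + X1 * X3 + X2 * X3). set (e3 := X1 * X2 * X3).
  assert (H2' : 2 * e2 - (R - (1 + S)) = 0) by (unfold e2; lra).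
  assert (H3' : 2 * S * (1 - S) * e3 - R * (1 + S) * e1 = 0) by (unfold e1, e3; lra).
  transitivity ((-4 * K ^ 2 * a * c ^ 4 + 4 * K ^ 3 * a * c ^ 6) * (2 * e2 - (R - (1 + S)))
     + (-6 * K * c ^ 3 + 2 * K ^ 2 * c ^ 5) * (2 * S * (1 - S) * e3 - R * (1 + S) * e1)
     + 2 * K * c ^ 3 * (1 + K * c ^ 2) * e1 * (S ^ 2 - 2 * R - 1)).
  - unfold e1, e2, e3. rewrite HS, HR. ring.
  - rewrite H2', H3', HE. ring.
Qed.

(* The closing condition is a quadratic equation for K, whose root is
   expressed through delta = sqrt (a^4 - a^2 b^2 + b^4). *)
Lemma delta_value (a b c K S R : R) :
  b ^ 2 = a ^ 2 - c ^ 2 -> 0 < K ->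
  S = K * c ^ 2 -> R = 1 - K * (2 * a ^ 2 - c ^ 2) -> S ^ 2 - 2 * R - 1 = 0 ->
  sqrt (a ^ 4 - a ^ 2 * b ^ 2 + b ^ 4) = (K * c ^ 4 + 2 * a ^ 2 - c ^ 2) / 2.
Proof.
  intros Hb2 HK HS HR HE.
  assert (Hpos : 0 <= (K * c ^ 4 + 2 * a ^ 2 - c ^ 2) / 2).
  { assert (0 <= K * c ^ 4) by (replace (c ^ 4) with ((c ^ 2) ^ 2) by ring;
                                apply Rmult_le_pos; [lra | apply pow2_ge_0]).
    assert (0 <= a ^ 2) by apply pow2_ge_0. assert (0 <= b ^ 2) by apply pow2_ge_0. lra. }
  rewrite <- (sqrt_pow2 _ Hpos). f_equal.
  replace (b ^ 4) with ((b ^ 2) ^ 2) by ring. rewrite Hb2.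
  apply Rminus_diag_uniq.
  transitivity (- c ^ 4 / 4 * (S ^ 2 - 2 * R - 1)); [rewrite HS, HR; field | rewrite HE; ring].
Qed.

(* The constant 2 k (3 + S) / ((1 - S) (1 + S)) is the closed form of the
   theorem; squaring reduces this to a polynomial identity modulo the closing
   condition. *)
Lemma perimeter_constant (a b c k S R : R) :
  0 < b -> b ^ 2 = a ^ 2 - c ^ 2 -> 0 < k ->
  S = k ^ 2 * c ^ 2 -> R = 1 - k ^ 2 * (2 * a ^ 2 - c ^ 2) -> S ^ 2 - 2 * R - 1 = 0 -> S < 1 ->
  2 * k * (3 + S) / ((1 - S) * (1 + S))
  = sqrt ((8 * a ^ 4 + 4 * a ^ 2 * b ^ 2 + 2 * b ^ 4) * sqrt (a ^ 4 - a ^ 2 * b ^ 2 + b ^ 4)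
          + 8 * a ^ 6 + 3 * a ^ 2 * b ^ 4 + 2 * b ^ 6) / (a ^ 2 * b ^ 2).
Proof.
  intros Hb Hb2 Hk HS HR HE HS1.
  assert (HK : 0 < k ^ 2) by (apply pow_lt; lra).
  assert (HS0 : 0 <= S) by (rewrite HS; apply Rmult_le_pos; apply pow2_ge_0).
  assert (Ha : 0 < a ^ 2) by (assert (0 <= c ^ 2) by apply pow2_ge_0;
                              assert (0 < b ^ 2) by (apply pow_lt; lra); lra).
  rewrite (delta_value a b c (k ^ 2) S R Hb2 HK HS HR HE).
  set (M := 2 * k * (3 + S) / ((1 - S) * (1 + S))).
  assert (HM : 0 <= M * (a ^ 2 * b ^ 2)).
  { unfold M. apply Rmult_le_pos; [| apply Rmult_le_pos; apply pow2_ge_0].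
    apply Rlt_le, Rdiv_lt_0_compat; apply Rmult_lt_0_compat; lra. }
  assert (Hsq : (8 * a ^ 4 + 4 * a ^ 2 * b ^ 2 + 2 * b ^ 4) * ((k ^ 2 * c ^ 4 + 2 * a ^ 2 - c ^ 2) / 2)
                + 8 * a ^ 6 + 3 * a ^ 2 * b ^ 4 + 2 * b ^ 6 = (M * (a ^ 2 * b ^ 2)) ^ 2).
  { apply (Rmult_eq_reg_l ((1 - S) ^ 2 * (1 + S) ^ 2));
      [| apply Rmult_integral_contrapositive_currified; apply pow_nonzero; lra].
    unfold M.
    replace (b ^ 4) with ((b ^ 2) ^ 2) by ring. replace (b ^ 6) with ((b ^ 2) ^ 3) by ring.
    rewrite Hb2.
    apply Rminus_diag_uniq.
    set (K := k ^ 2).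
    transitivity ((6 * K * a ^ 2 * c ^ 6 - 3 * K * a ^ 4 * c ^ 4 - 6 * K * a ^ 6 * c ^ 2 - K * c ^ 8
                   + 3 * K ^ 2 * a ^ 2 * c ^ 8 + 3 * K ^ 2 * a ^ 4 * c ^ 6 - K ^ 2 * a ^ 6 * c ^ 4
                   - K ^ 2 * c ^ 10 - 4 * K ^ 3 * a ^ 2 * c ^ 10 + 7 * K ^ 3 * a ^ 4 * c ^ 8
                   + K ^ 3 * c ^ 12 - 5 * a ^ 2 * c ^ 4 + 9 * a ^ 4 * c ^ 2 - 9 * a ^ 6 + c ^ 6)
                  * (S ^ 2 - 2 * R - 1)).
    - rewrite HS, HR. unfold K. field. lra.
    - rewrite HE. ring. }
  rewrite Hsq, sqrt_pow2 by exact HM.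
  assert (a <> 0) by (intro e; subst; lra).
  field. split; [lra | assumption].
Qed.

Lemma inverted_perimeter (a b rho X1 Y1 X2 Y2 X3 Y3 : R) :
  0 < b -> b < a -> X1 ^ 2 + Y1 ^ 2 = 1 -> X2 ^ 2 + Y2 ^ 2 = 1 -> X3 ^ 2 + Y3 ^ 2 = 1 ->
  let c := sqrt (a ^ 2 - b ^ 2) in
  let P1 := (a * X1, b * Y1) in let P2 := (a * X2, b * Y2) in let P3 := (a * X3, b * Y3) in
  focus_inversive_perimeter a b rho P1 P2 P3
  = rho ^ 2 * (dist P1 P2 * (a + c * X3) + dist P2 P3 * (a + c * X1) + dist P3 P1 * (a + c * X2))
    / ((a + c * X1) * (a + c * X2) * (a + c * X3)).
Proof.
  intros Hb Hba C1 C2 C3 c P1 P2 P3.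
  assert (Hc : 0 <= c) by apply sqrt_pos.
  assert (Hc2 : c ^ 2 = a ^ 2 - b ^ 2) by (apply pow2_sqrt; nra).
  assert (Hca : c < a) by nra.
  pose proof (focal_dist a b X1 Y1 Hb Hba C1) as F1.
  pose proof (focal_dist a b X2 Y2 Hb Hba C2) as F2.
  pose proof (focal_dist a b X3 Y3 Hb Hba C3) as F3.
  fold c P1 in F1. fold c P2 in F2. fold c P3 in F3.
  pose proof (focal_pos a c X1 Y1 Hc Hca C1) as r1.
  pose proof (focal_pos a c X2 Y2 Hc Hca C2) as r2.
  pose proof (focal_pos a c X3 Y3 Hc Hca C3) as r3.
  unfold focus_inversive_perimeter. cbv zeta.
  rewrite !invert_dist by (rewrite ?F1, ?F2, ?F3; lra).
  rewrite F1, F2, F3.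
  field. repeat split; lra.
Qed.

Lemma chord_length (S R k d X1 Y1 X2 Y2 : R) :
  0 < k -> 1 + S <> 0 -> related S R X1 Y1 X2 Y2 -> 1 - (X1 * X2 + Y1 * Y2) = k * d ->
  d = (1 + S - R - 2 * S * (X1 * X2)) / ((1 + S) * k).
Proof.
  unfold related. intros Hk HS HL Hg.
  apply (Rmult_eq_reg_l ((1 + S) * k)); [| apply Rmult_integral_contrapositive_currified; lra].
  transitivity ((1 + S) * (1 - (X1 * X2 + Y1 * Y2))); [rewrite Hg; ring |].
  rewrite <- HL. field. split; lra.
Qed.

Lemma perimeter_from_gap_ratio (a b rho k X1 Y1 X2 Y2 X3 Y3 : R) :
  0 < b -> b < a -> 0 < k ->
  X1 ^ 2 + Y1 ^ 2 = 1 -> X2 ^ 2 + Y2 ^ 2 = 1 -> X3 ^ 2 + Y3 ^ 2 = 1 ->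
  let P1 := (a * X1, b * Y1) in let P2 := (a * X2, b * Y2) in let P3 := (a * X3, b * Y3) in
  P1 <> P2 -> P2 <> P3 -> P3 <> P1 ->
  1 - ell_dot a b P1 P2 = k * dist P1 P2 ->
  1 - ell_dot a b P2 P3 = k * dist P2 P3 ->
  1 - ell_dot a b P3 P1 = k * dist P3 P1 ->
  focus_inversive_perimeter a b rho P1 P2 P3 =
    rho ^ 2 *
      (sqrt ((8 * a ^ 4 + 4 * a ^ 2 * b ^ 2 + 2 * b ^ 4) * sqrt (a ^ 4 - a ^ 2 * b ^ 2 + b ^ 4)
             + 8 * a ^ 6 + 3 * a ^ 2 * b ^ 4 + 2 * b ^ 6)
       / (a ^ 2 * b ^ 2)).
Proof.
  intros Hb Hba Hk C1 C2 C3 P1 P2 P3 N12 N23 N31 G12 G23 G31.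
  assert (Ha : 0 < a) by lra.
  set (c := sqrt (a ^ 2 - b ^ 2)).
  assert (Hc2 : c ^ 2 = a ^ 2 - b ^ 2) by (apply pow2_sqrt; nra).
  assert (Hc : 0 < c) by (apply sqrt_lt_R0; nra).
  set (S := k ^ 2 * c ^ 2). set (R := 1 - k ^ 2 * (2 * a ^ 2 - c ^ 2)).
  assert (HS0 : 0 < S) by (apply Rmult_lt_0_compat; apply pow_lt; lra).
  assert (Htri : chord_triangle S R X1 Y1 X2 Y2 X3 Y3).
  { repeat split; try assumption; try (apply (scaled_neq a b); assumption);
      apply (chord_relation a b); assumption. }
  assert (HE : S ^ 2 - 2 * R - 1 = 0) by (apply (closing_condition _ _ _ _ _ _ _ _ Htri); lra).
  assert (HS1 : S < 1).
  { apply (closing_S_lt_1 a b c (k ^ 2) S R Hb); try reflexivity;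
      [lra | apply pow_lt; lra | exact HE]. }
  destruct (symmetric_functions _ _ _ _ _ _ _ _ Htri HS0 HS1) as [H2 H3].
  destruct Htri as (_ & _ & _ & _ & _ & _ & L12 & L23 & L31).
  pose proof (inverted_perimeter a b rho X1 Y1 X2 Y2 X3 Y3 Hb Hba C1 C2 C3) as HP.
  cbv zeta in HP. fold c P1 P2 P3 in HP. rewrite HP. clear HP.
  unfold P1, P2, P3 in *.
  rewrite ell_dot_scaled in G12, G23, G31 by assumption.
  rewrite (chord_length S R k _ _ _ _ _ Hk ltac:(lra) L12 G12),
          (chord_length S R k _ _ _ _ _ Hk ltac:(lra) L23 G23),
          (chord_length S R k _ _ _ _ _ Hk ltac:(lra) L31 G31).
  rewrite <- (perimeter_constant a b c k S R Hb ltac:(lra) Hk eq_refl eq_refl HE HS1).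
  pose proof (weighted_gap_sum a c (k ^ 2) S R X1 X2 X3 eq_refl eq_refl
                ltac:(lra) ltac:(lra) HE H2 H3) as Hsum.
  pose proof (focal_pos a c X1 Y1 ltac:(lra) ltac:(nra) C1) as r1.
  pose proof (focal_pos a c X2 Y2 ltac:(lra) ltac:(nra) C2) as r2.
  pose proof (focal_pos a c X3 Y3 ltac:(lra) ltac:(nra) C3) as r3.
  apply (Rmult_eq_reg_l ((1 - S) * (1 + S) * k * ((a + c * X1) * (a + c * X2) * (a + c * X3))));
    [| repeat apply Rmult_integral_contrapositive_currified; lra].
  match type of Hsum with (1 - S) * ?N = _ =>
    transitivity (rho ^ 2 * ((1 - S) * N));
      [field; repeat split; lra | rewrite Hsum; field; lra] end.
Qed.

Theorem mainTheorem4 (a b rho : R) (P1 P2 P3 : pt) :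
  0 < b -> b < a -> 0 < rho ->
  is_3periodic a b P1 P2 P3 ->
  let delta := sqrt (a ^ 4 - a ^ 2 * b ^ 2 + b ^ 4) in
  focus_inversive_perimeter a b rho P1 P2 P3 =
    rho ^ 2 *
      (sqrt ((8 * a ^ 4 + 4 * a ^ 2 * b ^ 2 + 2 * b ^ 4) * delta
             + 8 * a ^ 6 + 3 * a ^ 2 * b ^ 4 + 2 * b ^ 6)
       / (a ^ 2 * b ^ 2)).
Proof.
  intros Hb Hba _ Hper delta.
  assert (Ha : 0 < a) by lra.
  destruct (three_periodic_gap_ratio a b P1 P2 P3 Ha Hb Hper) as (k & Hk & G12 & G23 & G31).
  destruct Hper as (E1 & E2 & E3 & N12 & N23 & N31 & _).
  destruct (ellipse_param a b P1 Ha Hb E1) as (X1 & Y1 & -> & C1).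
  destruct (ellipse_param a b P2 Ha Hb E2) as (X2 & Y2 & -> & C2).
  destruct (ellipse_param a b P3 Ha Hb E3) as (X3 & Y3 & -> & C3).
  exact (perimeter_from_gap_ratio a b rho k X1 Y1 X2 Y2 X3 Y3 Hb Hba Hk C1 C2 C3
           N12 N23 N31 G12 G23 G31).
Qed.
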